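(* Let $\mathscr H$ be a complex Hilbert space and $\mathbf{T}=(T_1,\dots,T_d)\in\mathbb{B}(\mathscr H)^d$. Then for every $x\in\mathscr H$, $$\sum_{k=1}^{d}\|T_kx\|^2+\sum_{k=1}^{d}|\langle T_k^2x,x\rangle|\le 2\sqrt{d}\,w_e(\mathbf{T})\Big(\sum_{k=1}^{d}\|T_kx\|^2\Big)^{1/2}\|x\|.$$
   Context: $\mathbb{B}(\mathscr H)$ denotes the bounded linear operators on $\mathscr H$. For a $d$-tuple $\mathbf{T}=(T_1,\dots,T_d)\in\mathbb{B}(\mathscr H)^d$, the Euclidean operator radius (joint numerical radius) is $w_e(\mathbf{T})=\sup\{(\sum_{k=1}^d|\langle T_kx,x\rangle|^2)^{1/2}: x\in\mathscr H,\ \|x\|=1\}$. *)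

From HB Require Import structures.
From mathcomp Require Import all_boot all_order all_algebra.
From mathcomp Require Import complex.
From mathcomp Require Import classical_sets reals.
Set Implicit Arguments. Unset Strict Implicit. Unset Printing Implicit Defensive.
Import Order.TTheory GRing.Theory Num.Theory.
Local Open Scope ring_scope.
Local Open Scope complex_scope.

Definition cmod (R : rcfType) (z : R[i]) : R :=
  Num.sqrt (complex.Re z ^+ 2 + complex.Im z ^+ 2).

Definition is_inner_product (R : rcfType) (V : lmodType R[i])
    (ip : V -> V -> R[i]) : Prop :=
  [/\ (forall (a : R[i]) (x y z : V), ip (a *: x + y) z = a * ip x z + ip y z),
      (forall x y : V, ip y x = (ip x y)^*),
      (forall x : V, 0 <= ip x x)
    & (forall x : V, ip x x = 0 -> x = 0)].

Definition ipnorm (R : rcfType) (V : lmodType R[i]) (ip : V -> V -> R[i])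
    (x : V) : R := Num.sqrt (complex.Re (ip x x)).

Definition ip_complete (R : rcfType) (V : lmodType R[i])
    (ip : V -> V -> R[i]) : Prop :=
  forall u : nat -> V,
    (forall e : R, 0 < e -> exists N : nat, forall m n : nat,
        (N <= m)%N -> (N <= n)%N -> ipnorm ip (u m - u n) < e) ->
    exists l : V, forall e : R, 0 < e -> exists N : nat, forall n : nat,
        (N <= n)%N -> ipnorm ip (u n - l) < e.

Definition is_hilbert (R : rcfType) (V : lmodType R[i])
    (ip : V -> V -> R[i]) : Prop :=
  is_inner_product ip /\ ip_complete ip.

Definition bounded_op (R : rcfType) (V : lmodType R[i])
    (ip : V -> V -> R[i]) (A : V -> V) : Prop :=
  exists M : R, forall x : V, ipnorm ip (A x) <= M * ipnorm ip x.

Definition euclid_op_radius (R : realType) (V : lmodType R[i])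
    (ip : V -> V -> R[i]) (d : nat) (T : 'I_d -> V -> V) : R :=
  sup [set r : R | exists x : V, ipnorm ip x = 1 /\
         r = Num.sqrt (\sum_(k < d) cmod (ip (T k x) x) ^+ 2)].

From HB Require Import structures.
From mathcomp Require Import all_boot all_order all_algebra.
From mathcomp Require Import complex.
From mathcomp Require Import boolp classical_sets reals.
From mathcomp Require Import ring lra.
Set Implicit Arguments. Unset Strict Implicit. Unset Printing Implicit Defensive.
Import Order.TTheory GRing.Theory Num.Theory.
Local Open Scope ring_scope.
Local Open Scope complex_scope.

(* Let w = w_e(T).  The proof has three ingredients.
   1. Numerical range: for every k and z, |<T_k z, z>| <= w ||z||^2, since
      |<T_k z, z>| <= sqrt (sum_j |<T_j z, z>|^2) <= w for unit z (the
      boundedness of the T_k makes the supremum defining w a genuine bound).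
   2. Off-diagonal estimate: if |<T z, z>| <= W ||z||^2 for all z, then
      |<T u, v>| + |<T v, u>| <= 2 W ||u|| ||v||.  This follows from the
      polarization identity and the parallelogram law, after rotating u by a
      unimodular phase so that the two moduli add up.
   3. Taking u = x, v = T_k x gives
      ||T_k x||^2 + |<T_k^2 x, x>| <= 2 w ||x|| ||T_k x||, and summing over k
      with the Cauchy-Schwarz bound sum_k ||T_k x|| <= sqrt d (sum_k ||T_k x||^2)^(1/2)
      yields the theorem. *)

Section ComplexModulus.
Variable R : rcfType.
Implicit Types a b : R[i].

Lemma normcE a : `|a| = (cmod a)%:C.
Proof. exact: normc_def. Qed.

Lemma cmod_ge0 a : 0 <= cmod a.
Proof. exact: sqrtr_ge0. Qed.

Lemma cmodM a b : cmod (a * b) = cmod a * cmod b.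
Proof. by apply: (@complexI R); rewrite rmorphM /= -!normcE normrM. Qed.

Lemma cmodB a b : cmod (a - b) <= cmod a + cmod b.
Proof. by have := ler_normB a b; rewrite !normcE -rmorphD /= lecR. Qed.

Lemma conjC_real (r : R) : (r%:C)^*%R = r%:C.
Proof. exact: conjc_real. Qed.

Lemma cmod_real (r : R) : 0 <= r -> cmod r%:C = r.
Proof. by move=> r0; apply: (@complexI R); rewrite -normcE ger0_norm // lecR. Qed.

Lemma cmod_nat (n : nat) : cmod (n%:R : R[i]) = n%:R.
Proof. by rewrite -(rmorph_nat (real_complex R)) cmod_real ?ler0n. Qed.

(* Two complex numbers can be rotated by conjugate unimodular factors so that
   their moduli add up: this is what lets the bounds on |<T u, v>| and
   |<T v, u>| be combined into a single polarization estimate. *)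
Lemma norm_phase a b :
  exists g, `|g| = 1 /\ `|g * a + g^* * b| = `|a| + `|b|.
Proof.
have trivial_phase (ab0 : a = 0 \/ b = 0) :
    exists g, `|g| = 1 /\ `|g * a + g^* * b| = `|a| + `|b|.
  by exists 1; rewrite normr1 conjC1 !mul1r; case: ab0 => ->; rewrite normr0 ?add0r ?addr0.
have [a0|a0] := eqVneq a 0; first by apply: trivial_phase; left.
have [b0|b0] := eqVneq b 0; first by apply: trivial_phase; right.
have na0 : `|a| != 0 by rewrite normr_eq0.
have nb0 : `|b| != 0 by rewrite normr_eq0.
(* g is a square root of the unimodular number a^* b / (|a| |b|) *)
set g := sqrtC (a^* * b / (`|a| * `|b|)).
have g2a : g ^+ 2 * a = `|a| / `|b| * b.
  rewrite sqrtCK (_ : _ * a = (a * a^*) * b / (`|a| * `|b|)); last by ring.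
  by rewrite -normCK; field; rewrite na0 nb0.
have ng : `|g| = 1.
  apply/eqP; rewrite -(@eqrXn2 _ 2) // expr1n -normrX sqrtCK normrM normfV.
  by rewrite !normrM norm_conjC !normr_id divff // mulf_neq0.
exists g; split => //.
have gg : g^* * g = 1 by rewrite mulrC -normCK ng expr1n.
have -> : g * a + g^* * b = g^* * (g ^+ 2 * a + b).
  rewrite mulrDr (_ : g^* * (g ^+ 2 * a) = (g^* * g) * (g * a)); last by ring.
  by rewrite gg mul1r.
rewrite normrM norm_conjC ng mul1r g2a -[X in _ + X]mul1r -mulrDl normrM.
by rewrite ger0_norm ?addr_ge0 ?divr_ge0 // mulrDl divfK // mul1r.
Qed.

Lemma cmod_phase a b :
  exists g, cmod g = 1 /\ cmod (g * a + g^* * b) = cmod a + cmod b.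
Proof.
have [g [ng hg]] := norm_phase a b; exists g.
by split; apply: (@complexI R); rewrite ?rmorphD /= -!normcE.
Qed.

End ComplexModulus.

Section InnerProduct.
Variables (R : realType) (V : lmodType R[i]) (ip : V -> V -> R[i]).
Hypothesis hip : is_inner_product ip.

Lemma ipD_l x y z : ip (x + y) z = ip x z + ip y z.
Proof. by case: hip => lin _ _ _; rewrite -[x in LHS]scale1r lin mul1r. Qed.

Lemma ip0_l z : ip 0 z = 0.
Proof. by apply: (addrI (ip 0 z)); rewrite -ipD_l !addr0. Qed.

Lemma ipZ_l a x z : ip (a *: x) z = a * ip x z.
Proof. by case: hip => lin _ _ _; rewrite -[a *: x]addr0 lin ip0_l addr0. Qed.

Lemma ipB_l x y z : ip (x - y) z = ip x z - ip y z.
Proof. by rewrite ipD_l -scaleN1r ipZ_l mulN1r. Qed.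

Lemma ipC x y : ip y x = (ip x y)^*%R.
Proof. by case: hip. Qed.

Lemma ip0_r z : ip z 0 = 0.
Proof. by rewrite ipC ip0_l conjC0. Qed.

Lemma ipD_r x y z : ip z (x + y) = ip z x + ip z y.
Proof. by rewrite ipC ipD_l rmorphD /= -!ipC. Qed.

Lemma ipZ_r a x z : ip z (a *: x) = a^* * ip z x.
Proof. by rewrite ipC ipZ_l rmorphM /= -ipC. Qed.

Lemma ipB_r x y z : ip z (x - y) = ip z x - ip z y.
Proof. by rewrite ipC ipB_l rmorphB /= -!ipC. Qed.

Lemma ipnorm_ge0 x : 0 <= ipnorm ip x.
Proof. exact: sqrtr_ge0. Qed.

Lemma ipnorm0 : ipnorm ip 0 = 0.
Proof. by rewrite /ipnorm ip0_l sqrtr0. Qed.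

Lemma ip_self x : ip x x = (ipnorm ip x ^+ 2)%:C.
Proof.
case: hip => _ _ pos _; have := pos x; rewrite lecE => /andP[/eqP im0 re0].
by rewrite sqr_sqrtr //; case: (ip x x) im0 => r s /= ->.
Qed.

Lemma ipnorm_eq0 x : ipnorm ip x = 0 -> x = 0.
Proof. by case: hip => _ _ _ def nx0; apply: def; rewrite ip_self nx0 expr0n. Qed.

Lemma ipnormZ a x : ipnorm ip (a *: x) = cmod a * ipnorm ip x.
Proof.
apply/eqP; rewrite -(@eqrXn2 _ 2) ?mulr_ge0 ?cmod_ge0 ?ipnorm_ge0 //.
apply/eqP/(@complexI R); rewrite -ip_self ipZ_l ipZ_r mulrA -normCK normcE ip_self.
by rewrite -!rmorphXn -rmorphM exprMn.
Qed.

Lemma ipnorm_normalize z :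
  ipnorm ip z != 0 -> ipnorm ip ((ipnorm ip z)^-1%:C *: z) = 1.
Proof.
move=> nz0; rewrite ipnormZ cmod_real ?invr_ge0 ?ipnorm_ge0 //.
exact: mulVf.
Qed.

Lemma parallelogram p q :
  ipnorm ip (p + q) ^+ 2 + ipnorm ip (p - q) ^+ 2
  = 2 * (ipnorm ip p ^+ 2 + ipnorm ip q ^+ 2).
Proof.
apply: (@complexI R); rewrite rmorphM !rmorphD /= -!ip_self rmorph1.
by rewrite !ipB_l !ipB_r !ipD_l !ipD_r; ring.
Qed.

(* A weak form of Cauchy-Schwarz, 2 |<y, z>| <= ||y||^2 + ||z||^2, obtained
   from 0 <= ||y - c z||^2 for the unimodular c aligning <y, z> with R+. *)
Lemma ip_le_half_sum y z :
  2 * cmod (ip y z) <= ipnorm ip y ^+ 2 + ipnorm ip z ^+ 2.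
Proof.
set w := ip y z; set m := cmod w.
have [m0|m0] := eqVneq m 0.
  by rewrite m0 mulr0 addr_ge0 ?sqr_ge0.
set c := (m^-1)%:C * w.
have ww : w * w^* = m%:C ^+ 2 by rewrite -normCK normcE.
have expand : ip (y - c *: z) (y - c *: z)
    = (ipnorm ip y ^+ 2 + ipnorm ip z ^+ 2 - 2 * m)%:C.
  have cc : c^*%R = (m^-1)%:C * w^*%R.
    by rewrite /c rmorphM /= conjC_real.
  rewrite ipB_l !ipB_r !ipZ_l !ipZ_r [ip z y]ipC -/w !ip_self cc /c.
  rewrite (_ : _ - _ = (ipnorm ip y ^+ 2)%:C - 2%:R * (m^-1)%:C * (w * w^*)
           + (m^-1)%:C ^+ 2 * (w * w^*) * (ipnorm ip z ^+ 2)%:C); last by ring.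
  rewrite ww fmorphV (mulr_natl m 2) rmorphB rmorphD rmorphMn !rmorphXn -mulr_natl.
  by field; apply: contra m0 => /eqP/complexI ->.
have := ip_self (y - c *: z); rewrite expand => /complexI Ere.
by rewrite -subr_ge0 Ere sqr_ge0.
Qed.

End InnerProduct.

Section Operator.
Variables (R : realType) (V : lmodType R[i]) (ip : V -> V -> R[i]).
Hypothesis hip : is_inner_product ip.
Variables (T : {linear V -> V}) (W : R).

Lemma polarization p q :
  ip (T (p + q)) (p + q) - ip (T (p - q)) (p - q)
  = 2 * (ip (T p) q + ip (T q) p).
Proof.
rewrite linearD linearB !(ipB_l hip) !(ipB_r hip) !(ipD_l hip) !(ipD_r hip).
by ring.
Qed.

Hypothesis numrange_le : forall z, cmod (ip (T z) z) <= W * ipnorm ip z ^+ 2.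

Lemma cmod_sym_part_le p q :
  cmod (ip (T p) q + ip (T q) p) <= W * (ipnorm ip p ^+ 2 + ipnorm ip q ^+ 2).
Proof.
rewrite -(@ler_pM2l _ 2) // mulrCA -(parallelogram hip) mulrDr.
rewrite -[2 in X in X <= _]cmod_nat -cmodM -polarization.
by apply: le_trans (cmodB _ _) _; rewrite lerD.
Qed.

(* Apply the previous estimate
   to p = (||v|| g) u and q = ||u|| v, with the phase g of cmod_phase. *)
Lemma cmod_offdiag_le u v :
  cmod (ip (T u) v) + cmod (ip (T v) u) <= 2 * W * ipnorm ip u * ipnorm ip v.
Proof.
set s := ipnorm ip u; set r := ipnorm ip v.
have s0 : 0 <= s := ipnorm_ge0 ip u; have r0 : 0 <= r := ipnorm_ge0 ip v.
have [s_eq0|s_gt0] := eqVneq s 0.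
  rewrite s_eq0 (ipnorm_eq0 hip s_eq0) linear0 (ip0_l hip) (ip0_r hip).
  by rewrite cmod_real // add0r mulr0 mul0r.
have [r_eq0|r_gt0] := eqVneq r 0.
  rewrite r_eq0 (ipnorm_eq0 hip r_eq0) linear0 (ip0_l hip) (ip0_r hip).
  by rewrite cmod_real // add0r mulr0.
have [g [ng hg]] := cmod_phase (ip (T u) v) (ip (T v) u).
set p := (r%:C * g) *: u; set q := s%:C *: v.
have sym : ip (T p) q + ip (T q) p
    = (r * s)%:C * (g * ip (T u) v + g^* * ip (T v) u).
  rewrite /p /q !linearZ !(ipZ_l hip) !(ipZ_r hip) rmorphM /= !conjC_real.
  by rewrite rmorphM; ring.
have np : ipnorm ip p = r * s by rewrite (ipnormZ hip) cmodM cmod_real // ng mulr1.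
have nq : ipnorm ip q = r * s by rewrite (ipnormZ hip) cmod_real // mulrC.
have := cmod_sym_part_le p q.
rewrite sym cmodM cmod_real ?mulr_ge0 // hg np nq => le_rs.
have rs_gt0 : 0 < r * s by rewrite mulr_gt0 // lt_def ?r_gt0 ?s_gt0.
rewrite -(ler_pM2l rs_gt0); apply: le_trans le_rs _.
by rewrite [leRHS](_ : _ = W * ((r * s) ^+ 2 + (r * s) ^+ 2)) //; ring.
Qed.

End Operator.

Lemma le_sqrt_sum_sqr (R : rcfType) (n : nat) (f : 'I_n -> R) (k : 'I_n) :
  (forall j, 0 <= f j) -> f k <= Num.sqrt (\sum_j f j ^+ 2).
Proof.
move=> f_ge0; rewrite -(ger0_norm (f_ge0 k)) -sqrtr_sqr; apply: ler_wsqrtr.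
by rewrite (bigD1 k) //= lerDl sumr_ge0 // => j _; apply: sqr_ge0.
Qed.

Section EuclideanOperatorRadius.
Variables (R : realType) (V : lmodType R[i]) (ip : V -> V -> R[i]).
Hypothesis hip : is_inner_product ip.
Variables (d : nat) (T : 'I_d -> {linear V -> V}).
Hypothesis hT : forall k, bounded_op ip (T k).

Let joint_values := [set r : R | exists z : V, ipnorm ip z = 1 /\
  r = Num.sqrt (\sum_(k < d) cmod (ip (T k z) z) ^+ 2)]%classic.

(* Boundedness of the T_k makes the supremum defining w_e(T) meaningful:
   for a unit vector z, |<T_k z, z>| <= (||T_k z||^2 + 1) / 2 <= (M_k^2 + 1) / 2. *)
Lemma joint_values_bounded : has_ubound joint_values.
Proof.
have [M hM] := choice hT.
exists (Num.sqrt (\sum_(k < d) ((M k ^+ 2 + 1) / 2) ^+ 2)) => _ [z [z1 ->]].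
apply: ler_wsqrtr; apply: ler_sum => k _.
apply: lerXn2r; rewrite ?nnegrE ?cmod_ge0 ?divr_ge0 ?addr_ge0 ?sqr_ge0 //.
have Tz_le : ipnorm ip (T k z) <= M k by have := hM k z; rewrite z1 mulr1.
have := ip_le_half_sum hip (T k z) z; rewrite z1 expr1n.
have : ipnorm ip (T k z) ^+ 2 <= M k ^+ 2.
  by apply: lerXn2r; rewrite ?nnegrE ?ipnorm_ge0 // (le_trans (ipnorm_ge0 ip _) Tz_le).
lra.
Qed.

Let w := euclid_op_radius ip (fun k => T k).

Lemma joint_value_le_radius z :
  ipnorm ip z = 1 -> Num.sqrt (\sum_(k < d) cmod (ip (T k z) z) ^+ 2) <= w.
Proof.
move=> z1; apply: sup_upper_bound; last by exists z.
by split; [exists (Num.sqrt (\sum_(k < d) cmod (ip (T k z) z) ^+ 2)), z |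
           exact: joint_values_bounded].
Qed.

Lemma radius_ge0 (z : V) : z != 0 -> 0 <= w.
Proof.
move=> z0; have nz0 : ipnorm ip z != 0 by apply: contra z0 => /eqP/(ipnorm_eq0 hip)->.
exact: le_trans (sqrtr_ge0 _) (joint_value_le_radius (ipnorm_normalize hip nz0)).
Qed.

Lemma numrange_le_radius k z : cmod (ip (T k z) z) <= w * ipnorm ip z ^+ 2.
Proof.
have [nz0|nz0] := eqVneq (ipnorm ip z) 0.
  by rewrite nz0 (ipnorm_eq0 hip nz0) linear0 (ip0_l hip) cmod_real // expr0n mulr0.
set c := (ipnorm ip z)^-1; have c0 : 0 <= c by rewrite invr_ge0 ipnorm_ge0.
have unit_bound := le_trans
  (le_sqrt_sum_sqr (f := fun j => cmod (ip (T j (c%:C *: z)) (c%:C *: z))) k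
     (fun j => cmod_ge0 _))
  (joint_value_le_radius (ipnorm_normalize hip nz0)).
move: unit_bound; rewrite /= linearZ (ipZ_l hip) (ipZ_r hip) conjC_real.
rewrite !cmodM cmod_real // mulrA -expr2 => le_w.
rewrite -(@ler_pM2l _ (c ^+ 2)) ?exprn_gt0 ?invr_gt0 ?lt_def ?nz0 ?ipnorm_ge0 //.
by apply: le_trans le_w _; rewrite mulrCA -exprMn mulVf // expr1n mulr1.
Qed.

End EuclideanOperatorRadius.

(* discrete Cauchy-Schwarz against the constant vector 1:
   (sum_k y_k)^2 <= n sum_k y_k^2, from 0 <= sum_(j,k) (y_j - y_k)^2 *)
Lemma sqr_sum_le (R : realFieldType) (n : nat) (y : 'I_n -> R) :
  (\sum_k y k) ^+ 2 <= n%:R * \sum_k y k ^+ 2.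
Proof.
set S := \sum_k y k; set Q := \sum_k y k ^+ 2.
have row_sum j : \sum_k (y j - y k) ^+ 2 = n%:R * y j ^+ 2 + Q - 2 * (y j * S).
  under eq_bigr => k _ do rewrite sqrrB.
  rewrite !big_split /= sumrN sumr_const card_ord sumrMnl -mulr_sumr -/S -/Q.
  by ring.
have : 0 <= \sum_j \sum_k (y j - y k) ^+ 2.
  by apply: sumr_ge0 => j _; apply: sumr_ge0 => k _; apply: sqr_ge0.
under eq_bigr => j _ do rewrite row_sum.
rewrite !big_split /= sumrN sumr_const card_ord -!mulr_sumr -mulr_suml -/S -/Q.
nra.
Qed.

Lemma sum_le_sqrt_card (R : rcfType) (n : nat) (y : 'I_n -> R) :
  \sum_k y k <= Num.sqrt n%:R * Num.sqrt (\sum_k y k ^+ 2).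
Proof.
rewrite -sqrtrM ?ler0n //; apply: le_trans (ler_norm _) _.
by rewrite -sqrtr_sqr; apply/ler_wsqrtr/sqr_sum_le.
Qed.

Theorem theorem2p2 (R : realType) (V : lmodType R[i]) (ip : V -> V -> R[i])
    (hV : is_hilbert ip) (d : nat) (T : 'I_d -> {linear V -> V})
    (hT : forall k : 'I_d, bounded_op ip (T k)) (x : V) :
  \sum_(k < d) ipnorm ip (T k x) ^+ 2
    + \sum_(k < d) cmod (ip (T k (T k x)) x)
  <= 2 * Num.sqrt (d%:R) * euclid_op_radius ip (fun k => T k)
       * Num.sqrt (\sum_(k < d) ipnorm ip (T k x) ^+ 2) * ipnorm ip x.
Proof.
case: hV => hip _.
set w := euclid_op_radius ip (fun k => T k); set s := ipnorm ip x.
have per_index k : ipnorm ip (T k x) ^+ 2 + cmod (ip (T k (T k x)) x)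
    <= 2 * w * s * ipnorm ip (T k x).
  have := cmod_offdiag_le hip (numrange_le_radius hip hT k) x (T k x).
  by rewrite (ip_self hip) cmod_real ?sqr_ge0.
have ws_ge0 : 0 <= 2 * w * s.
  have [x0|x0] := eqVneq x 0; first by rewrite /s x0 (ipnorm0 hip) mulr0.
  by rewrite !mulr_ge0 ?(radius_ge0 hip hT x0) ?ipnorm_ge0.
rewrite -big_split /=; apply: le_trans (ler_sum _ (fun k _ => per_index k)) _.
rewrite -mulr_sumr (_ : 2 * _ * _ * _ * s = 2 * w * s
    * (Num.sqrt d%:R * Num.sqrt (\sum_k ipnorm ip (T k x) ^+ 2))); last by ring.
by apply: ler_wpM2l => //; apply: sum_le_sqrt_card.
Qed.
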